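(* Assume the Margin assumption with $y_*\in\mathbb{R}^d_+$, Boundedness, and that the selection $v$ satisfies $v(y)\in\mathbb{R}^d_+$ for all $y\in\mathbb{R}^d_+$. For agents $A_0,\dots,A_T\in\mathcal{A}$, let $(y_t,b_t)$ be generated by the projected strategic perceptron with $\mathbb{L}=\mathbb{R}^d_+\times\mathbb{R}$ and $\gamma=1$. Then $$\sum_{t\in\mathcal{M}_T}L_{\mathrm{hinge}}\Big(\big(\tfrac{y_*}{d_*\|y_*\|_*},\tfrac{b_*}{d_*\|y_*\|_*}\big);(s(A_t,y_t,b_t),1),\ell(A_t)\Big)\le0,$$ and consequently $$|\mathcal{M}_T|\le\frac{(\|y_*\|_2^2+b_*^2)(\widetilde D^2+1)}{\|y_*\|_*^2\,d_*^2}.$$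
   Context: Setting: $\mathcal{A}\subseteq\mathbb{R}^d$, labels $\ell(A)\in\{\pm1\}$; $\operatorname{sign}(0)=+1$; norm $\|\cdot\|$ with dual $\|y\|_*=\max_{\|w\|\le1}y^\top w$; constant $c>0$; a fixed selection $v$ with $v(0)=0$ and $v(y)\in\arg\max_{\|w\|\le1}y^\top w$ for $y\ne0$, with $v(\lambda y)=v(y)$ for $\lambda>0$. Predicted label $\hat\ell(x,y,b)=\operatorname{sign}(y^\top x+b-2\|y\|_*/c)$. Response: for $y\ne0$, $r(A,y,b)=A+(\tfrac2c-\tfrac{y^\top A+b}{\|y\|_*})v(y)$ if $0\le\tfrac{y^\top A+b}{\|y\|_*}<\tfrac2c$, else $A$. Proxy: for $y\ne0$, $s(A,y,b)=A-\tfrac{y^\top A+b}{\|y\|_*}v(y)$ if $0\le\tfrac{y^\top A+b}{\|y\|_*}<\tfrac2c$ and $\ell(A)=-1$; $=A+(\tfrac2c-\tfrac{y^\top A+b}{\|y\|_*})v(y)$ if the range condition holds and $\ell(A)=+1$; $=A$ otherwise; $r(A,0,b)=s(A,0,b)=A$. Margin assumption: $d_*:=\max_{y\ne0,b}\min_{A\in\mathcal{A}}\ell(A)\frac{y^\top A+b}{\|y\|_*}$ attained at $(y_*,b_* )$, $y_*\ne0$, $d_*>0$. Boundedness: $D:=\sup_{A\in\mathcal{A}}\|A\|_2<\infty$; $C_{\|\cdot\|}=\max_y\|v(y)\|_2$; $\widetilde D=D+\tfrac2cC_{\|\cdot\|}$. Hinge loss $L_{\mathrm{hinge}}(q;\xi,\ell)=\max\{0,1-\ell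 q^\top\xi\}$. Projected strategic perceptron with closed convex cone $\mathbb{L}$ and stepsize $\gamma$: $q_0=(y_0,b_0)=(0,0)$; for $t=0,\dots,T$: agent $A_t$ is shown $(y_t,b_t)$, responds $r(A_t,y_t,b_t)$, is predicted $\hat\ell(r(A_t,y_t,b_t),y_t,b_t)$; with $\xi_t=(s(A_t,y_t,b_t),1)$, $z_{t+1}=q_t+\gamma\ell(A_t)\xi_t$ on a mistake, else $z_{t+1}=q_t$; $q_{t+1}=(y_{t+1},b_{t+1})=\Pi_{\mathbb{L}}(z_{t+1})$ (Euclidean projection). Mistake set $\mathcal{M}_T=\{t\in\{0,\dots,T\}:\hat\ell(r(A_t,y_t,b_t),y_t,b_t)\ne\ell(A_t)\}$. *)

From HB Require Import structures.
From mathcomp Require Import all_boot all_order all_algebra.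
From mathcomp Require Import boolp classical_sets reals.
Set Implicit Arguments. Unset Strict Implicit. Unset Printing Implicit Defensive.
Import Order.TTheory GRing.Theory Num.Theory.
Local Open Scope ring_scope.
Local Open Scope classical_set_scope.

Section StrategicPerceptron.
Variables (R : realType) (d : nat).
Local Notation vec := 'rV[R]_d.

Definition dotv (x y : vec) : R := \sum_(i < d) x 0 i * y 0 i.
Definition norm2 (x : vec) : R := Num.sqrt (dotv x x).

Definition is_norm (N : vec -> R) : Prop :=
  [/\ forall x, 0 <= N x,
      forall x, N x = 0 -> x = 0,
      forall (a : R) x, N (a *: x) = `|a| * N x &
      forall x y, N (x + y) <= N x + N y].

(* dual norm ||y||_* = max_{||w||<=1} y^T w (written as a sup; attained) *)
Definition dualnorm (N : vec -> R) (y : vec) : R :=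
  sup [set dotv y w | w in [set w | N w <= 1]].

Definition valid_selection (N : vec -> R) (v : vec -> vec) : Prop :=
  [/\ v 0 = 0,
      forall y, y != 0 -> N (v y) <= 1 /\ (forall w, N w <= 1 -> dotv y w <= dotv y (v y)) &
      forall (lam : R) y, 0 < lam -> v (lam *: y) = v y].

Definition sgn (x : R) : R := if 0 <= x then 1 else -1.

Definition pred_label (N : vec -> R) (c : R) (x y : vec) (b : R) : R :=
  sgn (dotv y x + b - 2 * dualnorm N y / c).

Definition response (N : vec -> R) (c : R) (v : vec -> vec) (A y : vec) (b : R) : vec :=
  if y == 0 then A else
  let z := (dotv y A + b) / dualnorm N y in
  if (0 <= z) && (z < 2 / c) then A + (2 / c - z) *: v y else A.

Definition proxy (N : vec -> R) (c : R) (v : vec -> vec) (ell : vec -> R)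
    (A y : vec) (b : R) : vec :=
  if y == 0 then A else
  let z := (dotv y A + b) / dualnorm N y in
  if (0 <= z) && (z < 2 / c) then
    (if ell A == -1 then A - z *: v y
     else if ell A == 1 then A + (2 / c - z) *: v y else A)
  else A.

Definition margin (N : vec -> R) (Aset : set vec) (ell : vec -> R) (y : vec) (b : R) : R :=
  inf [set ell A * (dotv y A + b) / dualnorm N y | A in Aset].

Definition Dbound (Aset : set vec) : R := sup [set norm2 A | A in Aset].
Definition Cbound (v : vec -> vec) : R := sup [set norm2 (v y) | y in [set: vec]].
Definition Dtilde (Aset : set vec) (c : R) (v : vec -> vec) : R :=
  Dbound Aset + 2 / c * Cbound v.

Definition hinge (q : vec * R) (xi : vec * R) (l : R) : R :=
  Num.max 0 (1 - l * (dotv q.1 xi.1 + q.2 * xi.2)).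

Definition orthant (y : vec) : Prop := forall i, 0 <= y 0 i.
Definition Lcone : set (vec * R) := [set w | orthant w.1].

Definition sqdist (p z : vec * R) : R := dotv (p.1 - z.1) (p.1 - z.1) + (p.2 - z.2) ^+ 2.

Definition is_proj (L : set (vec * R)) (z p : vec * R) : Prop :=
  L p /\ forall w, L w -> sqdist p z <= sqdist w z.

Definition mistake (N : vec -> R) (c : R) (v : vec -> vec) (ell : vec -> R)
    (A : vec) (q : vec * R) : bool :=
  pred_label N c (response N c v A q.1 q.2) q.1 q.2 != ell A.

Definition xi_of (N : vec -> R) (c : R) (v : vec -> vec) (ell : vec -> R)
    (A : vec) (q : vec * R) : vec * R := (proxy N c v ell A q.1 q.2, 1).

Definition pre_update (N : vec -> R) (c : R) (v : vec -> vec) (ell : vec -> R)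
    (gamma : R) (A : vec) (q : vec * R) : vec * R :=
  if mistake N c v ell A q then
    (q.1 + (gamma * ell A) *: (xi_of N c v ell A q).1,
     q.2 + gamma * ell A * (xi_of N c v ell A q).2)
  else q.

Definition projected_strategic_perceptron (N : vec -> R) (c : R) (v : vec -> vec)
    (ell : vec -> R) (L : set (vec * R)) (gamma : R) (A : nat -> vec)
    (q : nat -> vec * R) (T : nat) : Prop :=
  q 0%N = (0, 0) /\
  forall t, (t <= T)%N -> is_proj L (pre_update N c v ell gamma (A t) (q t)) (q t.+1).

End StrategicPerceptron.

(* Since [v y] lies in the orthant whenever [y] does and the iterates stay in
   the cone [R^d_+ x R], the proxy [s = A + k v y] moves an agent [A] only
   along a direction on which [ystar] has a nonnegative inner product, and
   towards the side of its own label.  Hence the proxies keep the margin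
   [dstar ||ystar||_dual] of [(ystar, bstar)], which makes every hinge loss
   vanish.  On a mistake the proxy is (weakly) misclassified by the current
   iterate, so, as in Novikoff's proof, the squared distance from the iterate
   to a suitably scaled copy [U] of [(ystar, bstar)] drops by [D~^2 + 1];
   the projection onto the convex cone, which contains [U], only decreases
   it further. *)

From HB Require Import structures.
From mathcomp Require Import all_boot all_order all_algebra.
From mathcomp Require Import boolp classical_sets reals.
From mathcomp Require Import ring lra.
Set Implicit Arguments. Unset Strict Implicit. Unset Printing Implicit Defensive.
Import Order.TTheory GRing.Theory Num.Theory.
Local Open Scope ring_scope.
Local Open Scope classical_set_scope.

Section InnerProduct.
Variables (R : realType) (d : nat).
Local Notation vec := 'rV[R]_d.
Implicit Types (x y z : vec) (a : R).

Lemma dotvC x y : dotv x y = dotv y x.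
Proof. by apply: eq_bigr => i _; rewrite mulrC. Qed.

Lemma dotvDl x y z : dotv (x + y) z = dotv x z + dotv y z.
Proof. by rewrite /dotv -big_split; apply: eq_bigr => i _; rewrite mxE mulrDl. Qed.

Lemma dotvZl a x y : dotv (a *: x) y = a * dotv x y.
Proof. by rewrite /dotv mulr_sumr; apply: eq_bigr => i _; rewrite mxE mulrA. Qed.

Lemma dotvNl x y : dotv (- x) y = - dotv x y.
Proof. by rewrite -scaleN1r dotvZl mulN1r. Qed.

Lemma dotvBl x y z : dotv (x - y) z = dotv x z - dotv y z.
Proof. by rewrite dotvDl dotvNl. Qed.

Lemma dotv0l y : dotv 0 y = 0.
Proof. by rewrite -(scale0r 0) dotvZl mul0r. Qed.

Lemma dotvDr x y z : dotv z (x + y) = dotv z x + dotv z y.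
Proof. by rewrite !(dotvC z) dotvDl. Qed.

Lemma dotvZr a x y : dotv y (a *: x) = a * dotv y x.
Proof. by rewrite !(dotvC y) dotvZl. Qed.

Lemma dotvBr x y z : dotv z (x - y) = dotv z x - dotv z y.
Proof. by rewrite !(dotvC z) dotvBl. Qed.

Lemma dotvv_ge0 x : 0 <= dotv x x.
Proof. by apply: sumr_ge0 => i _; rewrite -expr2 sqr_ge0. Qed.

Lemma dotvv_eq0 x : (dotv x x == 0) = (x == 0).
Proof.
apply/idP/eqP => [|->]; last by rewrite dotv0l.
rewrite psumr_eq0 => [/allP x0|i _]; last by rewrite -expr2 sqr_ge0.
apply/rowP => i; rewrite mxE.
by have /implyP/(_ isT) := x0 i (mem_index_enum i); rewrite -expr2 sqrf_eq0 => /eqP.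
Qed.

Lemma dotvv_gt0 x : x != 0 -> 0 < dotv x x.
Proof. by rewrite lt0r dotvv_eq0 dotvv_ge0 andbT. Qed.

Lemma dotv_sqrD a x y :
  dotv (x + a *: y) (x + a *: y) = dotv x x + 2 * a * dotv x y + a ^+ 2 * dotv y y.
Proof. rewrite dotvDl !dotvDr !dotvZl !dotvZr (dotvC y x); ring. Qed.

(* Expand [|y - t x|^2 >= 0] at [t = <x, y> / |x|^2]. *)
Lemma dotv_CauchySchwarz x y : dotv x y ^+ 2 <= dotv x x * dotv y y.
Proof.
have [->|x0] := eqVneq x 0; first by rewrite !dotv0l expr0n mul0r.
have xx_gt0 := dotvv_gt0 x0.
pose t := dotv x y / dotv x x.
have tE : t * dotv x x = dotv x y by rewrite divfK ?gt_eqF.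
have := dotvv_ge0 (y + (- t) *: x).
rewrite dotv_sqrD (dotvC y x) sqrrN; have := dotvv_ge0 y; nra.
Qed.

Lemma norm2_ge0 x : 0 <= norm2 x.
Proof. exact: sqrtr_ge0. Qed.

Lemma norm2_sqr x : norm2 x ^+ 2 = dotv x x.
Proof. by rewrite sqr_sqrtr // dotvv_ge0. Qed.

Lemma dotv_le_norm2 x y : dotv x y <= norm2 x * norm2 y.
Proof.
have := dotv_CauchySchwarz x y; rewrite -!norm2_sqr -exprMn.
have := mulr_ge0 (norm2_ge0 x) (norm2_ge0 y); nra.
Qed.

Lemma norm2D x y : norm2 (x + y) <= norm2 x + norm2 y.
Proof.
have sqr_le : norm2 (x + y) ^+ 2 <= (norm2 x + norm2 y) ^+ 2.
  rewrite -(scale1r y) norm2_sqr dotv_sqrD -!norm2_sqr scale1r.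
  have := dotv_le_norm2 x y; nra.
by rewrite -ler_sqr ?nnegrE ?addr_ge0 ?norm2_ge0.
Qed.

Lemma norm2Z a x : norm2 (a *: x) = `|a| * norm2 x.
Proof. by rewrite /norm2 dotvZl dotvZr mulrA -expr2 sqrtrM ?sqr_ge0 // sqrtr_sqr. Qed.

Lemma orthant_dotv_ge0 x y : orthant x -> orthant y -> 0 <= dotv x y.
Proof. by move=> x_ge0 y_ge0; apply: sumr_ge0 => i _; rewrite mulr_ge0. Qed.

End InnerProduct.

Section DualNorm.
Variables (R : realType) (d : nat) (N : 'rV[R]_d -> R) (v : 'rV[R]_d -> 'rV[R]_d).
Hypotheses (normN : is_norm N) (selv : valid_selection N v).

Lemma norm_eq0 : N 0 = 0.
Proof. by case: normN => _ _ NZ _; rewrite -(scale0r 0) NZ normr0 mul0r. Qed.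

Lemma dualnorm_sel y : y != 0 -> dualnorm N y = dotv y (v y).
Proof.
move=> y0; case: selv => _ /(_ y y0) [vy_le1 vy_max] _.
have ub : ubound [set dotv y w | w in [set w | N w <= 1]] (dotv y (v y)).
  by move=> _ [w /= w_le1 <-]; exact: vy_max.
apply/le_anti/andP; split; first by apply: ge_sup => //; exists (dotv y (v y)), (v y).
by apply: ub_le_sup; [exists (dotv y (v y)) | exists (v y)].
Qed.

Lemma dualnorm0 : dualnorm N 0 = 0.
Proof.
have dot0 : [set dotv 0 w | w in [set w | N w <= 1]] = [set 0].
  apply/seteqP; split=> [_ [w _ <-]|_ ->]; first by rewrite /= dotv0l.
  by exists 0; rewrite /= ?norm_eq0 ?dotv0l.
by rewrite /dualnorm dot0 sup1.
Qed.

Lemma dualnorm_gt0 y : y != 0 -> 0 < dualnorm N y.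
Proof.
move=> y0; rewrite dualnorm_sel //.
case: selv => _ /(_ y y0) [_ vy_max] _; case: normN => N_ge0 N_eq0 NZ _.
have Ny_gt0 : 0 < N y by rewrite lt0r N_ge0 andbT; apply: contra y0 => /eqP/N_eq0->.
apply: (lt_le_trans _ (vy_max ((N y)^-1 *: y) _)).
  by rewrite dotvZr mulr_gt0 ?invr_gt0 ?dotvv_gt0.
by rewrite NZ ger0_norm ?invr_ge0 ?(ltW Ny_gt0) // mulVf ?gt_eqF.
Qed.

(* The unit ball of [N] is bounded coordinatewise: testing the maximality of
   [v] against the vectors [+-e_i] bounds [|w_i|] for every [N w <= 1]. *)
Lemma selection_bounded : exists K, forall y, norm2 (v y) <= K.
Proof.
case: (selv) => v0 sel _.
pose e i : 'rV[R]_d := delta_mx 0 i.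
have e_neq0 i : e i != 0.
  by apply/eqP => /rowP /(_ i); rewrite !mxE !eqxx; apply/eqP; exact: oner_neq0.
have dot_e i w : dotv (e i) w = w 0 i.
  rewrite /dotv (bigD1 i) //= big1 ?addr0 => [|j ji]; first by rewrite mxE !eqxx mul1r.
  by rewrite mxE (negbTE ji) andbF mul0r.
pose m i := `|dotv (e i) (v (e i))| + `|dotv (- e i) (v (- e i))|.
have coord_le w i : N w <= 1 -> `|w 0 i| <= m i.
  move=> w_le1; have eN_neq0 : - e i != 0 by rewrite oppr_eq0.
  have wi_le := (sel _ (e_neq0 i)).2 w w_le1.
  have wi_ge := (sel _ eN_neq0).2 w w_le1.
  rewrite dot_e in wi_le; rewrite dotvNl dot_e in wi_ge.
  have := ler_norm (dotv (e i) (v (e i))); have := ler_norm (dotv (- e i) (v (- e i))).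
  have := normr_ge0 (dotv (e i) (v (e i))); have := normr_ge0 (dotv (- e i) (v (- e i))).
  by rewrite ler_norml /m => *; apply/andP; split; lra.
exists (Num.sqrt (\sum_(i < d) m i ^+ 2)) => y.
have [->|y0] := eqVneq y 0; first by rewrite v0 /norm2 dotv0l sqrtr0 sqrtr_ge0.
rewrite ler_sqrt; last by apply: sumr_ge0 => i _; rewrite sqr_ge0.
apply: ler_sum => i _; rewrite -expr2 -real_normK ?num_real //.
have := coord_le _ i (sel _ y0).1; have := normr_ge0 (v y 0 i); nra.
Qed.

Lemma Cbound_ub y : norm2 (v y) <= Cbound v.
Proof.
have [K vK] := selection_bounded.
by apply: ub_le_sup; [exists K => _ [z _ <-] | exists y].
Qed.

End DualNorm.

Lemma ge0_of_quadratic_ge0 (R : realFieldType) (g h : R) : 0 <= h ->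
  (forall e, 0 < e -> e <= 1 -> 0 <= 2 * e * g + e ^+ 2 * h) -> 0 <= g.
Proof.
move=> h_ge0 quad_ge0; rewrite leNgt; apply/negP => g_lt0.
have [h0|h_neq0] := eqVneq h 0; first by have := quad_ge0 1 ltr01 (lexx _); rewrite h0; lra.
have h_gt0 : 0 < h by rewrite lt0r h_neq0.
pose e := Num.min 1 (- g / h).
have e_gt0 : 0 < e by rewrite lt_min ltr01 divr_gt0 // oppr_gt0.
have eh_le : e * h <= - g by rewrite -ler_pdivlMr // ge_min lexx orbT.
have e_le1 : e <= 1 by rewrite ge_min lexx.
have := quad_ge0 e e_gt0 e_le1; nra.
Qed.

Section Projection.
Variables (R : realType) (d : nat).
Local Notation vec := 'rV[R]_d.

Definition convex_set (L : set (vec * R)) : Prop :=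
  forall p u e, L p -> L u -> 0 < e -> e <= 1 ->
    L (p.1 + e *: (u.1 - p.1), p.2 + e * (u.2 - p.2)).

Lemma Lcone_convex : convex_set (@Lcone R d).
Proof.
move=> p u e p_ge0 u_ge0 e_gt0 e_le1 i /=; rewrite !mxE.
by have := p_ge0 i; have := u_ge0 i; nra.
Qed.

(* The projection [p] of [z] satisfies the variational inequality
   [<p - z, p - u> <= 0], obtained by comparing [p] with the points of the
   segment from [p] towards [u]. *)
Lemma is_proj_sqdist_le (L : set (vec * R)) z p u :
  convex_set L -> is_proj L z p -> L u -> sqdist p u <= sqdist z u.
Proof.
move=> convL [Lp p_min] Lu.
set a1 := p.1 - z.1; set a2 := p.2 - z.2; set b1 := p.1 - u.1; set b2 := p.2 - u.2.
have obtuse : 0 <= - (dotv a1 b1 + a2 * b2).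
  apply: (@ge0_of_quadratic_ge0 _ _ (dotv b1 b1 + b2 ^+ 2)).
    by rewrite addr_ge0 ?dotvv_ge0 ?sqr_ge0.
  move=> e e_gt0 e_le1; have := p_min _ (convL _ _ _ Lp Lu e_gt0 e_le1); rewrite /sqdist /=.
  have -> : p.1 + e *: (u.1 - p.1) - z.1 = a1 + (- e) *: b1.
    by apply/rowP => i; rewrite !mxE; ring.
  rewrite dotv_sqrD -/a1 /b2 /a2; nra.
rewrite /sqdist.
have -> : z.1 - u.1 = b1 + (-1) *: a1 by apply/rowP => i; rewrite !mxE; ring.
rewrite dotv_sqrD (dotvC b1) -/b1 -/b2.
have := dotvv_ge0 a1; have := sqr_ge0 a2.
by move: obtuse; rewrite /a2 /b2; nra.
Qed.

End Projection.

Section AgentSet.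
Variables (R : realType) (d : nat).
Local Notation vec := 'rV[R]_d.

(* Positivity of the margin rules out the junk value [inf S = 0] of a set
   [S] with no infimum. *)
Lemma margin_le (N : vec -> R) (Aset : set vec) (ell : vec -> R) y b a :
  0 < margin N Aset ell y b -> 0 < dualnorm N y -> Aset a ->
  margin N Aset ell y b * dualnorm N y <= ell a * (dotv y a + b).
Proof.
move=> m_gt0 n_gt0 Aa; rewrite -ler_pdivlMr //.
move: m_gt0; rewrite /margin; set E := [set _ | _ in Aset] => m_gt0.
have [_ E_lb] : has_inf E by apply: contrapT => /inf_out E0; rewrite E0 ltxx in m_gt0.
by apply: ge_inf E_lb _ _; exists a.
Qed.

Lemma Dbound_ub (Aset : set vec) a :
  (exists M, forall a, Aset a -> norm2 a <= M) -> Aset a -> norm2 a <= Dbound Aset.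
Proof. by move=> [M AM] Aa; apply: ub_le_sup; [exists M => _ [b Ab <-]; exact: AM | exists a]. Qed.

End AgentSet.

Lemma sgn_neq_label (R : realType) (x l : R) : l = 1 \/ l = -1 -> sgn x != l ->
  (l = 1 /\ x < 0) \/ (l = -1 /\ 0 <= x).
Proof. by rewrite /sgn; case: lerP => x_sgn; case=> ->; rewrite ?eqxx //; [right | left]. Qed.

Section StrategicResponse.
Variables (R : realType) (d : nat) (N : 'rV[R]_d -> R) (c : R).
Variables (v : 'rV[R]_d -> 'rV[R]_d) (ell : 'rV[R]_d -> R).
Hypotheses (normN : is_norm N) (c_gt0 : 0 < c) (selv : valid_selection N v).

Lemma proxy_shift a y b :
  exists k : R, [/\ `|k| <= 2 / c, 0 <= ell a * k & proxy N c v ell a y b = a + k *: v y].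
Proof.
have c2_ge0 : 0 <= 2 / c by rewrite divr_ge0 ?ltW.
have unmoved : exists k : R, [/\ `|k| <= 2 / c, 0 <= ell a * k & a = a + k *: v y].
  by exists 0; rewrite normr0 mulr0 scale0r addr0.
rewrite /proxy; case: eqP => // _.
set z := (dotv y a + b) / dualnorm N y; case: ifP => [/andP[z_ge0 z_lt]|_] //.
case: eqP => [->|_].
  by exists (- z); rewrite normrN ger0_norm // scaleNr mulN1r opprK; split=> //; exact: ltW.
case: eqP => [->|_] //; exists (2 / c - z).
by rewrite mul1r ger0_norm ?subr_ge0 ?(ltW z_lt) //; split=> //; lra.
Qed.

Lemma proxy_margin_ge y b a ystar bstar K :
  0 <= dotv ystar (v y) -> K <= ell a * (dotv ystar a + bstar) ->
  K <= ell a * (dotv ystar (proxy N c v ell a y b) + bstar).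
Proof.
move=> vy_ge0 K_le; have [k [_ lk_ge0 ->]] := proxy_shift a y b.
rewrite dotvDr dotvZr; have := mulr_ge0 lk_ge0 vy_ge0; nra.
Qed.

Lemma proxy_norm2_le a y b : norm2 (proxy N c v ell a y b) <= norm2 a + 2 / c * Cbound v.
Proof.
have [k [k_le _ ->]] := proxy_shift a y b.
apply: le_trans (norm2D _ _) _; rewrite lerD2l norm2Z.
by apply: ler_pM; rewrite ?normr_ge0 ?norm2_ge0 ?(Cbound_ub selv).
Qed.

Lemma proxy_dotvv_le (Aset : set 'rV[R]_d) a y b :
  (exists M, forall a, Aset a -> norm2 a <= M) -> Aset a ->
  dotv (proxy N c v ell a y b) (proxy N c v ell a y b) <= Dtilde Aset c v ^+ 2.
Proof.
move=> Abounded Aa; rewrite -norm2_sqr.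
have s_le : norm2 (proxy N c v ell a y b) <= Dtilde Aset c v.
  by apply: le_trans (proxy_norm2_le a y b) _; rewrite lerD2r Dbound_ub.
by have := norm2_ge0 (proxy N c v ell a y b); nra.
Qed.

(* The strategic analogue of [l <q, x> <= 0] for a misclassified example. *)
Lemma mistake_proxy_le0 a q :
  ell a = 1 \/ ell a = -1 -> mistake N c v ell a q ->
  ell a * (dotv q.1 (proxy N c v ell a q.1 q.2) + q.2) <= 0.
Proof.
case: q => y b ell_pm; rewrite /mistake /pred_label /response /proxy /=.
case: (eqVneq y 0) => [->|y0].
  rewrite !dotv0l (dualnorm0 normN) mulr0 mul0r subr0 add0r.
  by move=> /(sgn_neq_label ell_pm) [[-> ?]|[-> ?]]; lra.
rewrite (dualnorm_sel selv y0); set n := dotv y (v y); set z := _ / n.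
have n_gt0 : 0 < n by rewrite /n -(dualnorm_sel selv y0) (dualnorm_gt0 normN selv y0).
have zE : z * n = dotv y a + b by rewrite divfK ?gt_eqF.
have cn_gt0 : 0 < 2 * n / c by rewrite !mulr_gt0 ?invr_gt0.
move=> /(sgn_neq_label ell_pm) label.
(* In the band the response lands exactly on the decision boundary, which is
   predicted [+1]; the mistaken negative agents then have their proxy on the
   current hyperplane. *)
case: ifP => [/andP[z_ge0 z_lt]|out_band] in label *.
  rewrite dotvDr dotvZr mulrBl zE in label.
  have score0 : dotv y a + (2 / c * n - (dotv y a + b)) + b - 2 * n / c = 0 by ring.
  rewrite score0 in label; case: label => [[_]|[-> _]]; first by rewrite ltxx.
  by rewrite eqxx dotvBr dotvZr -/n zE; lra.
have : (z < 0) \/ (2 * n / c <= z * n).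
  case: (ltrP z 0) => [|z_ge0]; [by left | right].
  move: out_band; rewrite z_ge0 /= => /negbT; rewrite -leNgt => z_ge.
  by rewrite mulrAC ler_wpM2r // ltW.
rewrite -zE; case: label => [[-> ?]|[-> ?]]; nra.
Qed.

End StrategicResponse.

Lemma telescope_count (R : realDomainType) (f : nat -> R) (P : pred nat) (lam : R) n :
  (forall t, (t < n)%N -> f t.+1 + lam * (P t)%:R <= f t) ->
  f n + lam * (count P (iota 0 n))%:R <= f 0%N.
Proof.
elim: n => [|n IH] step; first by rewrite mulr0 addr0.
rewrite -addn1 iotaD count_cat /= addn0 natrD mulrDr addrA.
apply: le_trans (IH (fun t tn => step t (ltnW tn))).
by rewrite addn1 addrAC lerD2r step.
Qed.

Section Potential.
Variables (R : realType) (d : nat).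
Local Notation vec := 'rV[R]_d.

Lemma sqdist_ge0 (p z : vec * R) : 0 <= sqdist p z.
Proof. by rewrite addr_ge0 ?dotvv_ge0 ?sqr_ge0. Qed.

Lemma sqdist0_scale (k b : R) (y : vec) :
  sqdist (0, 0) (k *: y, k * b) = k ^+ 2 * (norm2 y ^+ 2 + b ^+ 2).
Proof. by rewrite /sqdist /= !sub0r -!scaleNr dotvZl dotvZr norm2_sqr; ring. Qed.

Lemma perceptron_update_sqdist_le (q U : vec * R) (s : vec) (l lam : R) :
  l = 1 \/ l = -1 -> l * (dotv q.1 s + q.2) <= 0 ->
  lam <= l * (dotv U.1 s + U.2) -> dotv s s + 1 <= lam ->
  sqdist (q.1 + l *: s, q.2 + l) U + lam <= sqdist q U.
Proof.
move=> l_pm q_wrong U_sep s_le; rewrite /sqdist /=.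
have -> : q.1 + l *: s - U.1 = (q.1 - U.1) + l *: s by rewrite addrAC.
rewrite dotv_sqrD (dotvBl q.1 U.1 s).
by move: q_wrong U_sep; case: l_pm => ->; nra.
Qed.

Lemma hinge_scaled_eq0 (y s : vec) (b l m : R) :
  0 < m -> m <= l * (dotv y s + b) -> hinge (m^-1 *: y, b / m) (s, 1) l = 0.
Proof.
move=> m_gt0 sep; apply/max_idPl; rewrite /= dotvZl mulr1 subr_le0.
have -> : m^-1 * dotv y s + b / m = (dotv y s + b) / m by rewrite mulrDl mulrC.
by rewrite mulrA ler_pdivlMr // mul1r.
Qed.

End Potential.

Section ProjectedPerceptron.
Variables (R : realType) (d : nat) (N : 'rV[R]_d -> R) (c : R).
Variables (v : 'rV[R]_d -> 'rV[R]_d) (ell : 'rV[R]_d -> R).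
Hypotheses (normN : is_norm N) (c_gt0 : 0 < c) (selv : valid_selection N v).
Variables (L : set ('rV[R]_d * R)) (A : nat -> 'rV[R]_d) (q : nat -> 'rV[R]_d * R) (T : nat).
Hypothesis run : projected_strategic_perceptron N c v ell L 1 A q T.

Local Notation s t := (proxy N c v ell (A t) (q t).1 (q t).2).
Local Notation mistake_at t := (mistake N c v ell (A t) (q t)).

Lemma perceptron_iterate_in t : L (0, 0) -> (t <= T.+1)%N -> L (q t).
Proof. by case: run => q0 proj; case: t => [|t] L0 tT; [rewrite q0 | exact: (proj t tT).1]. Qed.

Lemma perceptron_potential (U : 'rV[R]_d * R) (lam : R) :
  convex_set L -> L U ->
  (forall t, (t <= T)%N -> ell (A t) = 1 \/ ell (A t) = -1) ->
  (forall t, (t <= T)%N -> mistake_at t ->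
     lam <= ell (A t) * (dotv U.1 (s t) + U.2) /\ dotv (s t) (s t) + 1 <= lam) ->
  lam * (count (fun t => mistake_at t) (iota 0 T.+1))%:R <= sqdist (q 0%N) U.
Proof.
move=> convL LU ell_pm sep; have [_ proj] := run.
have step t : (t < T.+1)%N ->
    sqdist (q t.+1) U + lam * (mistake_at t)%:R <= sqdist (q t) U.
  rewrite ltnS => tT; have := is_proj_sqdist_le convL (proj t tT) LU.
  rewrite /pre_update /xi_of; case: ifP => mis /= proj_le; last by rewrite mulr0 addr0.
  have [U_sep s_le] := sep t tT mis.
  have := perceptron_update_sqdist_le (ell_pm t tT)
    (mistake_proxy_le0 normN c_gt0 selv (ell_pm t tT) mis) U_sep s_le.
  by move: proj_le; rewrite !mul1r mulr1; lra.
apply: le_trans (telescope_count step).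
by rewrite lerDr sqdist_ge0.
Qed.

(* Novikoff's bound, with [U = (lam / m) (y, b)] as reference point. *)
Lemma perceptron_mistake_bound (y : 'rV[R]_d) (b m lam : R) :
  convex_set L -> 0 < m -> 0 < lam -> L ((lam / m) *: y, lam / m * b) ->
  (forall t, (t <= T)%N -> ell (A t) = 1 \/ ell (A t) = -1) ->
  (forall t, (t <= T)%N -> m <= ell (A t) * (dotv y (s t) + b)) ->
  (forall t, (t <= T)%N -> dotv (s t) (s t) + 1 <= lam) ->
  (count (fun t => mistake_at t) (iota 0 T.+1))%:R <= (norm2 y ^+ 2 + b ^+ 2) * lam / m ^+ 2.
Proof.
move=> convL m_gt0 lam_gt0 LU ell_pm sep s_le.
have kE : lam / m * m = lam by rewrite divfK ?gt_eqF.
have k_ge0 : 0 <= lam / m by rewrite divr_ge0 ?ltW.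
have U_sep t : (t <= T)%N -> mistake_at t ->
    lam <= ell (A t) * (dotv (lam / m *: y) (s t) + lam / m * b) /\ dotv (s t) (s t) + 1 <= lam.
  move=> tT _; split; last exact: s_le.
  by rewrite dotvZl -[X in X <= _]kE; have := sep t tT; nra.
have := perceptron_potential convL LU ell_pm U_sep.
case: run => -> _; rewrite sqdist0_scale => pot.
rewrite ler_pdivlMr ?exprn_gt0 // -(ler_pM2l lam_gt0) mulrA.
apply: le_trans (ler_wpM2r (sqr_ge0 m) pot) _.
by rewrite le_eqVlt; apply/orP; left; apply/eqP; field; rewrite gt_eqF.
Qed.

End ProjectedPerceptron.

Theorem mainTheorem19 (R : realType) (d : nat) (Aset : set 'rV[R]_d)
  (ell : 'rV[R]_d -> R) (N : 'rV[R]_d -> R) (c : R) (v : 'rV[R]_d -> 'rV[R]_d)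
  (ystar : 'rV[R]_d) (bstar dstar : R) (T : nat) (A : nat -> 'rV[R]_d)
  (q : nat -> 'rV[R]_d * R) :
  is_norm N -> 0 < c ->
  (forall a, Aset a -> ell a = 1 \/ ell a = -1) ->
  valid_selection N v ->
  ystar != 0 -> 0 < dstar -> dstar = margin N Aset ell ystar bstar ->
  (forall y b, y != 0 -> margin N Aset ell y b <= dstar) ->
  orthant ystar ->
  (exists M, forall a, Aset a -> norm2 a <= M) ->
  (forall y, orthant y -> orthant (v y)) ->
  (forall t, (t <= T)%N -> Aset (A t)) ->
  projected_strategic_perceptron N c v ell (Lcone (d:=d)) 1 A q T ->
  (\sum_(t <- iota 0 T.+1 | mistake N c v ell (A t) (q t))
      hinge ((dstar * dualnorm N ystar)^-1 *: ystar, bstar / (dstar * dualnorm N ystar))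
            (xi_of N c v ell (A t) (q t)) (ell (A t)) <= 0) /\
  ((count (fun t => mistake N c v ell (A t) (q t)) (iota 0 T.+1))%:R <=
     (norm2 ystar ^+ 2 + bstar ^+ 2) * (Dtilde Aset c v ^+ 2 + 1)
     / (dualnorm N ystar ^+ 2 * dstar ^+ 2)).
Proof.
move=> normN c_gt0 ell_pm selv ys0 dstar_gt0 dstarE _ ystar_ge0 Abounded v_ge0 A_in run.
have n_gt0 : 0 < dualnorm N ystar := dualnorm_gt0 normN selv ys0.
set m := dstar * dualnorm N ystar; have m_gt0 : 0 < m by rewrite mulr_gt0.
have L0 : Lcone (0 : 'rV[R]_d, 0 : R) by move=> i; rewrite mxE.
have sep t : (t <= T)%N ->
    m <= ell (A t) * (dotv ystar (proxy N c v ell (A t) (q t).1 (q t).2) + bstar).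
  move=> tT; apply: proxy_margin_ge => //.
    apply: orthant_dotv_ge0 ystar_ge0 (v_ge0 _ _).
    exact: (perceptron_iterate_in run L0 (leqW tT) : Lcone (q t)).
  by rewrite /m dstarE; apply: margin_le => //; [rewrite -dstarE | exact: A_in].
split.
  rewrite big_seq_cond big1 // => t /andP[]; rewrite mem_iota ltnS => /andP[_ tT] _.
  exact: hinge_scaled_eq0 m_gt0 (sep t tT).
have lam_gt0 : 0 < Dtilde Aset c v ^+ 2 + 1 by rewrite ltr_wpDl ?sqr_ge0.
have -> : dualnorm N ystar ^+ 2 * dstar ^+ 2 = m ^+ 2 by rewrite exprMn mulrC.
apply: (perceptron_mistake_bound normN c_gt0 selv run (@Lcone_convex R d) m_gt0 lam_gt0 _ _ sep).
- by move=> i /=; rewrite mxE mulr_ge0 ?ystar_ge0 // divr_ge0 ?(ltW lam_gt0) ?(ltW m_gt0).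
- by move=> t tT; apply: ell_pm; apply: A_in.
- by move=> t tT; rewrite lerD2r (proxy_dotvv_le _ c_gt0 selv _ _ Abounded (A_in t tT)).
Qed.
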